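(* Let $H$ be a digraph and $\delta>0$. Then $G(H,\delta)$ is obtained when $x_1=x_2$. Hence \[ G(H,\delta)=\inf_{\substack{x\ge0,\ 0\le y_1,y_2\le1\\ y_1\vee y_2=1}}\{x(y_1+y_2): g_H(x,x,y_1,y_2)=1+\delta\}. \]
   Context: A digraph has no self-loops and at most one directed edge per ordered pair; degree = in-degree + out-degree; $\Delta$ is the maximum degree of $H$. $H^*$ is the induced subgraph on vertices of degree $\Delta$; $\mathcal S_H$ is the collection of independent sets of $H^*$ (including $\emptyset$). For $S\in\mathcal S_H$ let $T=\mathsf N(S)$ be the vertices outside $S$ adjacent in either direction to $S$, $\mathsf E(S,T)$ and $\mathsf E(T,S)$ the sets of edges from $S$ to $T$ and from $T$ to $S$, and $F_S$ the bipartite digraph on $S\cup T$ with edges $\mathsf E(S,T)\cup\mathsf E(T,S)$. A maximum fractional matching of $F_S$ is $w:\mathsf E(F_S)\to[0,1]$ with $\sum_{e\ni v}w(e)\le1$ for all vertices $v$ and equality for $v\in S$; $a_S=\max_w\sum_{e\in\mathsf E(S,T)}w(e)$, $b_S=\max_w\sum_{e\in\mathsf E(T,S)}w(e)$ over such $w$. $\mathsf v^+(S),\mathsf v^-(S),\mathsf v^{\pm}(S)$ are the numbers of vertices of $S$ with no in-neighbours, no out-neighbours, and both, respectively. \[ g_H(x_1,x_2,y_1,y_2)=\sum_{S\in\mathcal S_H}x_1^{\mathsf v^+(S)}x_2^{\mathsf v^-(S)}(x_1\wedge x_2)^{\mathsf v^{\pm}(S)}y_1^{a_S}y_2^{b_S},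 \] \[ G(H,\delta)=\inf_{x_1,x_2\ge0,\ 0\le y_1,y_2\le1}\{x_1y_1+x_2y_2:g_H(x_1,x_2,y_1,y_2)=1+\delta\}. \] ''Obtained when $x_1=x_2$'' means restricting the infimum to $x_1=x_2$ does not change its value. *)

From HB Require Import structures.
From mathcomp Require Import all_boot all_order all_algebra.
From mathcomp Require Import all_classical all_reals all_analysis.
Set Implicit Arguments. Unset Strict Implicit. Unset Printing Implicit Defensive.
Import Order.TTheory GRing.Theory Num.Theory.
Local Open Scope ring_scope.
Local Open Scope classical_set_scope.

(* A digraph on a finite vertex type V is a relation e : rel V
   (e u v = there is an edge u -> v); "no self-loops" is irreflexive e,
   "at most one edge per ordered pair" is automatic. *)
Section Digraph.
Variables (V : finType) (e : rel V).

Definition outdeg (v : V) : nat := #|[set u | e v u]|.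
Definition indeg (v : V) : nat := #|[set u | e u v]|.
Definition deg (v : V) : nat := (indeg v + outdeg v)%N.
Definition maxdeg : nat := \max_(v : V) deg v.
Definition Hstar : {set V} := [set v | deg v == maxdeg].
Definition indepHstar (S : {set V}) : bool :=
  (S \subset Hstar) && [forall u in S, forall v in S, ~~ e u v].
Definition nbhd (S : {set V}) : {set V} :=
  [set v | (v \notin S) && [exists u in S, e u v || e v u]].
Definition edgeF (S : {set V}) (u v : V) : bool :=
  e u v && (((u \in S) && (v \in nbhd S)) || ((u \in nbhd S) && (v \in S))).

Variable R : realType.

Definition wdeg (S : {set V}) (w : V -> V -> R) (v : V) : R :=
  \sum_(u | edgeF S v u) w v u + \sum_(u | edgeF S u v) w u v.

Definition frac_matching (S : {set V}) (w : V -> V -> R) : Prop :=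
  (forall u v, edgeF S u v -> 0 <= w u v <= 1) /\
  (forall v, wdeg S w v <= 1) /\
  (forall v, v \in S -> wdeg S w v = 1).

Definition wST (S : {set V}) (w : V -> V -> R) : R :=
  \sum_(u in S) \sum_(v in nbhd S | e u v) w u v.
Definition wTS (S : {set V}) (w : V -> V -> R) : R :=
  \sum_(u in nbhd S) \sum_(v in S | e u v) w u v.

(* a_S, b_S : maxima (the maxima are attained, the feasible set being a
   nonempty compact polytope, so sup = max) *)
Definition aS (S : {set V}) : R := sup [set wST S w | w in frac_matching S].
Definition bS (S : {set V}) : R := sup [set wTS S w | w in frac_matching S].

Definition vplus (S : {set V}) : nat := #|[set v in S | indeg v == 0%N]|.
Definition vminus (S : {set V}) : nat := #|[set v in S | outdeg v == 0%N]|.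
Definition vpm (S : {set V}) : nat :=
  #|[set v in S | (0 < indeg v)%N && (0 < outdeg v)%N]|.

(* g_H; real exponents via powR (with 0 `^ 0 = 1) *)
Definition gH (x1 x2 y1 y2 : R) : R :=
  \sum_(S : {set V} | indepHstar S)
    x1 ^+ vplus S * x2 ^+ vminus S * (Num.min x1 x2) ^+ vpm S
    * (y1 `^ aS S) * (y2 `^ bS S).

(* G(H, delta), as an extended real (inf of the empty set = +oo) *)
Definition GH (delta : R) : \bar R :=
  ereal_inf [set z : \bar R | exists x1 x2 y1 y2 : R,
    0 <= x1 /\ 0 <= x2 /\ 0 <= y1 <= 1 /\ 0 <= y2 <= 1 /\
    gH x1 x2 y1 y2 = 1 + delta /\ z = (x1 * y1 + x2 * y2)%:E].

End Digraph.

From HB Require Import structures.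
From mathcomp Require Import all_boot all_order all_algebra.
From mathcomp Require Import all_classical all_reals all_analysis.
From mathcomp Require Import ring lra.

(* For every independent set [S] of [H^*] the exponents of [g_H] satisfy
   [a_S <= v^+ + v^pm], [b_S <= v^- + v^pm] and [|S| <= a_S + b_S]: each vertex
   of [S] splits its unit weight between [E(S,T)] and [E(T,S)], and the uniform
   weight [1/Delta] is a fractional matching saturating [S].  These inequalities
   allow exponent to be moved from the smaller of [s1, s2] to the larger one, so
   each monomial of [g_H(X s1, X s2, y1, y2)] is dominated by the corresponding
   monomial of [g_H(X, X, s1 y1, s2 y2)] when [max(s1, s2) >= 1].
   With [X = max(x1 y1, x2 y2)] this yields a diagonal point [(X, X, z1, z2)]
   with [max(z1, z2) = 1], the same objective and [g_H >= 1 + delta]; since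
   [x |-> g_H(x, x, z1, z2)] is a polynomial equal to [1] at [0], the
   intermediate value theorem lowers [x] to reach [g_H = 1 + delta] without
   increasing the objective.  [X = 0] is impossible, as then [g_H <= 1]. *)

Set Implicit Arguments.
Unset Strict Implicit.
Unset Printing Implicit Defensive.
Import Order.TTheory GRing.Theory Num.Theory numFieldNormedType.Exports.
Local Open Scope ring_scope.

Section PowerInequalities.
Variable R : realType.

Lemma ge0_powRD (x r s : R) : 0 <= r -> 0 <= s -> x `^ (r + s) = x `^ r * x `^ s.
Proof.
move=> r0 s0; have [rs0|rs0] := eqVneq (r + s) 0.
  have [-> ->] : r = 0 /\ s = 0 by split; lra.
  by rewrite addr0 powRr0 mulr1.
by rewrite powRD // (negbTE rs0).
Qed.

Lemma le_powR_transfer (s t a b : R) (m q : nat) :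
  0 <= s <= t -> 1 <= t -> 0 <= a <= m%:R -> q%:R + (m%:R - a) <= b ->
  s ^+ m * t ^+ q <= s `^ a * t `^ b.
Proof.
move=> /andP[s0 st] t1 /andP[a0 am] hb.
have t0 : 0 <= t by lra.
have ma0 : 0 <= m%:R - a by lra.
have -> : s ^+ m = s `^ a * s `^ (m%:R - a).
  by rewrite -powR_mulrn // -ge0_powRD // addrC subrK.
rewrite -mulrA ler_wpM2l ?powR_ge0 //.
apply: (@le_trans _ _ (t `^ (q%:R + (m%:R - a)))); last exact: ler_powR.
rewrite (ge0_powRD t) // powR_mulrn // mulrC ler_wpM2l ?exprn_ge0 //.
by apply: ge0_ler_powR; rewrite ?nnegrE.
Qed.

Lemma expr_min_le_powR (s1 s2 a b : R) (p q r : nat) :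
  0 <= s1 -> 0 <= s2 -> 1 <= Num.max s1 s2 ->
  a <= (p + r)%:R -> b <= (q + r)%:R -> (p + q + r)%:R <= a + b ->
  s1 ^+ p * s2 ^+ q * Num.min s1 s2 ^+ r <= s1 `^ a * s2 `^ b.
Proof.
rewrite !natrD => s10 s20 s12 ha hb hab.
have a0 : 0 <= a by have := ler0n R p; lra.
have b0 : 0 <= b by have := ler0n R q; lra.
move: s12; have [le12 s12|lt21 s12] := leP s1 s2.
- rewrite mulrAC -exprD.
  apply: le_powR_transfer; rewrite ?s10 ?le12 ?a0 ?natrD //=; lra.
- rewrite -mulrA -exprD mulrC [leRHS]mulrC.
  apply: le_powR_transfer; rewrite ?s20 ?(ltW lt21) ?b0 ?natrD //=; lra.
Qed.

End PowerInequalities.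

Lemma ereal_inf_le_dominated (R : realType) (A B : set (\bar R)) :
  (forall a, A a -> exists2 b, B b & (b <= a)%E) -> (ereal_inf B <= ereal_inf A)%E.
Proof. by move=> AB; apply: le_ereal_inf_tmp => a /AB /ge_ereal_inf. Qed.

Lemma sup_ge_mem_le_ubound (R : realType) (E : set R) (x c : R) :
  E x -> ubound E c -> x <= sup E <= c.
Proof.
move=> Ex Ec; apply/andP; split; first exact: ub_le_sup (ex_intro _ c Ec) _ Ex.
by apply: ge_sup => //; exists x.
Qed.

Lemma in_classic_set_predE (T : Type) (P : pred T) u :
  (u \in [set x | P x]%classic) = P u.
Proof. by apply/idP/idP; rewrite in_setE. Qed.

Lemma card_set_in_sum (T : finType) (S : {set T}) (P : pred T) :
  #|[set v in S | P v]| = (\sum_(v in S) P v)%N.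
Proof.
rewrite -sum1_card [LHS]big_mkcond [RHS]big_mkcond /=; apply: eq_bigr => v _.
by rewrite !inE; case: (v \in S); case: (P v).
Qed.

Section FractionalMatchings.
Variables (V : finType) (e : rel V) (R : realType).
Implicit Types (S : {set V}) (w : V -> V -> R).

Definition out_weight S w u : R := \sum_(v | edgeF e S u v) w u v.
Definition in_weight S w u : R := \sum_(v | edgeF e S v u) w v u.

Lemma notin_nbhd S u : u \in S -> u \notin nbhd e S.
Proof. by move=> uS; rewrite inE uS. Qed.

Lemma edgeF_from_mem S u v : u \in S -> edgeF e S u v = (v \in nbhd e S) && e u v.
Proof. by move=> uS; rewrite /edgeF uS (negbTE (notin_nbhd uS)) orbF andbC. Qed.

Lemma edgeF_to_mem S u v : v \in S -> edgeF e S u v = (u \in nbhd e S) && e u v.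
Proof. by move=> vS; rewrite /edgeF vS (negbTE (notin_nbhd vS)) andbF andbT andbC. Qed.

Lemma wST_sum_out S w : wST e S w = \sum_(u in S) out_weight S w u.
Proof.
apply: eq_bigr => u uS; apply: eq_bigl => v.
by rewrite edgeF_from_mem.
Qed.

Lemma wTS_sum_in S w : wTS e S w = \sum_(v in S) in_weight S w v.
Proof.
rewrite /wTS (exchange_big_dep (mem S)) /=; last by move=> u v _ /andP[].
apply: eq_bigr => v vS; apply: eq_bigl => u.
by rewrite edgeF_to_mem // vS.
Qed.

Lemma frac_matching_saturated S w u : frac_matching e S w -> u \in S ->
  [/\ 0 <= out_weight S w u, 0 <= in_weight S w u
    & out_weight S w u + in_weight S w u = 1].
Proof.
case=> w01 [_ satS] uS; split; last exact: satS.
- by apply: sumr_ge0 => v /w01 /andP[].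
- by apply: sumr_ge0 => v /w01 /andP[].
Qed.

Lemma in_weight_eq0 S w u : indeg e u = 0%N -> in_weight S w u = 0.
Proof.
move=> indeg0; apply: big1 => v /andP[evu _].
by move: indeg0; rewrite /indeg (cardD1 v) in_classic_set_predE evu.
Qed.

Lemma out_weight_eq0 S w u : outdeg e u = 0%N -> out_weight S w u = 0.
Proof.
move=> outdeg0; apply: big1 => v /andP[euv _].
by move: outdeg0; rewrite /outdeg (cardD1 v) in_classic_set_predE euv.
Qed.

Lemma vplus_le_wST S w : frac_matching e S w -> (vplus e S)%:R <= wST e S w.
Proof.
move=> fw; rewrite wST_sum_out /vplus card_set_in_sum natr_sum; apply: ler_sum => u uS.
have [out0 in0 sat] := frac_matching_saturated fw uS.
by case: eqP => [/(in_weight_eq0 S w)|_] /=; lra.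
Qed.

Lemma vminus_le_wTS S w : frac_matching e S w -> (vminus e S)%:R <= wTS e S w.
Proof.
move=> fw; rewrite wTS_sum_in /vminus card_set_in_sum natr_sum; apply: ler_sum => u uS.
have [out0 in0 sat] := frac_matching_saturated fw uS.
by case: eqP => [/(out_weight_eq0 S w)|_] /=; lra.
Qed.

Lemma wST_add_wTS S w : frac_matching e S w -> wST e S w + wTS e S w = #|S|%:R.
Proof.
move=> fw; rewrite wST_sum_out wTS_sum_in -big_split /= (eq_bigr (fun=> 1)).
  by rewrite sumr_const.
by move=> u uS; have [_ _ ->] := frac_matching_saturated fw uS.
Qed.

End FractionalMatchings.

Lemma maxdeg_gt0 (V : finType) (e : rel V) : (exists u v, e u v) -> (0 < maxdeg e)%N.
Proof.
case=> u [v euv]; apply: leq_trans (leq_bigmax u); rewrite /deg ltn_addl //.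
by apply/card_gt0P; exists v; rewrite in_classic_set_predE.
Qed.

Section IndependentSets.
Variables (V : finType) (e : rel V) (R : realType).
Hypothesis maxdeg_pos : (0 < maxdeg e)%N.
Implicit Types (S : {set V}).

Lemma indepHstar_set0 : indepHstar e finset.set0.
Proof. by rewrite /indepHstar finset.sub0set; apply/forallP => u; rewrite inE. Qed.

Lemma indepHstar_no_edge S u v : indepHstar e S -> u \in S -> v \in S -> e u v = false.
Proof. by case/andP=> _ /forall_inP/(_ u) indS uS vS; apply/negbTE/(forall_inP (indS uS)). Qed.

Lemma indepHstar_deg S u : indepHstar e S -> u \in S -> deg e u = maxdeg e.
Proof. by case/andP=> /fintype.subsetP subS _ /subS; rewrite inE => /eqP. Qed.

Lemma vclasses_card S : indepHstar e S -> (vplus e S + vminus e S + vpm e S)%N = #|S|.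
Proof.
move=> indS; rewrite /vplus /vminus /vpm !card_set_in_sum -!big_split -sum1_card /=.
apply: eq_bigr => u uS; move: maxdeg_pos; rewrite -(indepHstar_deg indS uS) /deg.
by case: (indeg e u); case: (outdeg e u).
Qed.

Lemma edgeF_from_indep S u v : indepHstar e S -> u \in S -> edgeF e S u v = e u v.
Proof.
move=> indS uS; rewrite edgeF_from_mem // andb_idl // => euv.
rewrite inE; apply/andP; split; last by apply/existsP; exists u; rewrite uS euv.
by apply/negP => vS; rewrite (indepHstar_no_edge indS uS vS) in euv.
Qed.

Lemma edgeF_to_indep S u v : indepHstar e S -> v \in S -> edgeF e S u v = e u v.
Proof.
move=> indS vS; rewrite edgeF_to_mem // andb_idl // => euv.
rewrite inE; apply/andP; split; last by apply/existsP; exists v; rewrite vS euv orbT.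
by apply/negP => uS; rewrite (indepHstar_no_edge indS uS vS) in euv.
Qed.

Definition uniform_weight : V -> V -> R := fun _ _ => (maxdeg e)%:R^-1.

Lemma frac_matching_uniform S : indepHstar e S -> frac_matching e S uniform_weight.
Proof.
move=> indS; have D0 : (0 : R) < (maxdeg e)%:R by rewrite ltr0n.
have wdegE v : wdeg e S uniform_weight v =
    (#|[pred u | edgeF e S v u]| + #|[pred u | edgeF e S u v]|)%:R / (maxdeg e)%:R.
  by rewrite /wdeg !sumr_const mulr_natl mulrnDr.
split; first by move=> u v _; rewrite invr_ge0 ler0n invf_le1 // ler1n.
split=> v; rewrite wdegE.
  rewrite ler_pdivrMr // mul1r ler_nat; apply: leq_trans (leq_bigmax v).
  rewrite /deg addnC leq_add //; apply: subset_leq_card; apply/fintype.subsetP => u;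
    by rewrite inE in_classic_set_predE => /andP[].
move=> vS; have -> : #|[pred u | edgeF e S v u]| = outdeg e v.
  by apply: eq_card => u; rewrite inE in_classic_set_predE edgeF_from_indep.
have -> : #|[pred u | edgeF e S u v]| = indeg e v.
  by apply: eq_card => u; rewrite inE in_classic_set_predE edgeF_to_indep.
by rewrite addnC -/(deg e v) (indepHstar_deg indS vS) divff // gt_eqF.
Qed.

Lemma exponent_bounds S : indepHstar e S ->
  [/\ aS e R S <= (vplus e S + vpm e S)%:R, bS e R S <= (vminus e S + vpm e S)%:R
    & (vplus e S + vminus e S + vpm e S)%:R <= aS e R S + bS e R S].
Proof.
move=> indS; have fw0 := frac_matching_uniform indS.
have card_S : #|S|%:R = (vplus e S + vminus e S + vpm e S)%:R :> R.
  by rewrite vclasses_card.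
have /andP[a_ge a_le] : wST e S uniform_weight <= aS e R S <= (vplus e S + vpm e S)%:R.
  apply: sup_ge_mem_le_ubound; first by exists uniform_weight.
  move=> _ [w fw <-]; have := wST_add_wTS fw; have := vminus_le_wTS fw.
  by rewrite card_S !natrD; lra.
have /andP[b_ge b_le] : wTS e S uniform_weight <= bS e R S <= (vminus e S + vpm e S)%:R.
  apply: sup_ge_mem_le_ubound; first by exists uniform_weight.
  move=> _ [w fw <-]; have := wST_add_wTS fw; have := vplus_le_wST fw.
  by rewrite card_S !natrD; lra.
split=> //; rewrite -card_S -(wST_add_wTS fw0); lra.
Qed.

End IndependentSets.

Section GeneratingFunction.
Variables (V : finType) (e : rel V) (R : realType).
Hypothesis maxdeg_pos : (0 < maxdeg e)%N.
Implicit Types (S : {set V}) (x y : R).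

Definition gH_term x1 x2 y1 y2 S : R :=
  x1 ^+ vplus e S * x2 ^+ vminus e S * Num.min x1 x2 ^+ vpm e S
  * y1 `^ aS e R S * y2 `^ bS e R S.

Lemma gHE x1 x2 y1 y2 :
  gH e x1 x2 y1 y2 = \sum_(S | indepHstar e S) gH_term x1 x2 y1 y2 S.
Proof. by []. Qed.

Lemma vclasses_gt0 S : indepHstar e S -> S != finset.set0 ->
  (0 < vplus e S + vminus e S + vpm e S)%N.
Proof. by move=> indS; rewrite vclasses_card // card_gt0. Qed.

Lemma gH_eq1 x1 x2 y1 y2 :
  (forall S, indepHstar e S -> S != finset.set0 -> gH_term x1 x2 y1 y2 S = 0) ->
  gH e x1 x2 y1 y2 = 1.
Proof.
move=> term0; rewrite gHE (bigD1 finset.set0) ?indepHstar_set0 //= big1 ?addr0; last first.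
  by move=> S /andP[]; exact: term0.
have [a0 b0 ab0] := exponent_bounds R maxdeg_pos (indepHstar_set0 e).
move: a0 b0 ab0; rewrite /gH_term /vplus /vminus /vpm !card_set_in_sum !big_set0 /=.
move=> a0 b0 ab0; have [-> ->] : aS e R finset.set0 = 0 /\ bS e R finset.set0 = 0.
  by split; lra.
by rewrite !expr0 !powRr0 !mulr1.
Qed.

Lemma gH0 y1 y2 : gH e 0 0 y1 y2 = 1.
Proof.
apply: gH_eq1 => S indS nS; rewrite /gH_term minxx -!exprD expr0n.
by rewrite eqn0Ngt vclasses_gt0 // !mul0r.
Qed.

Lemma gH_at_y0 x : gH e x x 0 0 = 1.
Proof.
apply: gH_eq1 => S indS nS; rewrite /gH_term.
have [_ _ ab_ge] := exponent_bounds R maxdeg_pos indS.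
have [a0|a0] := eqVneq (aS e R S) 0; last by rewrite powR0 // mulr0 mul0r.
rewrite (powR0 (x := bS e R S)) ?mulr0 // gt_eqF //.
by move: ab_ge; rewrite a0 add0r; apply: lt_le_trans; rewrite ltr0n vclasses_gt0.
Qed.

Lemma gH_rescale_le X s1 s2 y1 y2 :
  0 <= X -> 0 <= s1 -> 0 <= s2 -> 1 <= Num.max s1 s2 -> 0 <= y1 -> 0 <= y2 ->
  gH e (X * s1) (X * s2) y1 y2 <= gH e X X (s1 * y1) (s2 * y2).
Proof.
move=> X0 s10 s20 s12 y10 y20; apply: ler_sum => S indS.
have [a_le b_le ab_ge] := exponent_bounds R maxdeg_pos indS.
have core := expr_min_le_powR s10 s20 s12 a_le b_le ab_ge.
rewrite /gH_term -minr_pMr // minxx !exprMn !powRM //.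
move: core; set p := vplus e S; set q := vminus e S; set r := vpm e S.
set a := aS e R S; set b := bS e R S => core.
set XY := X ^+ (p + q + r) * (y1 `^ a * y2 `^ b).
rewrite [leLHS](_ : _ = XY * (s1 ^+ p * s2 ^+ q * Num.min s1 s2 ^+ r)).
  rewrite [leRHS](_ : _ = XY * (s1 `^ a * s2 `^ b)); last by rewrite /XY !exprD; ring.
  by rewrite ler_wpM2l // !mulr_ge0 ?exprn_ge0 ?powR_ge0.
by rewrite /XY !exprD; ring.
Qed.

Lemma gH_le1_degenerate x1 x2 y1 y2 : 0 <= x1 -> 0 <= x2 -> 0 <= y1 -> 0 <= y2 ->
  x1 * y1 = 0 -> x2 * y2 = 0 -> gH e x1 x2 y1 y2 <= 1.
Proof.
move=> x10 x20 y10 y20 u10 u20.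
have [M0|M_neq0] := eqVneq (Num.max x1 x2) 0.
  have [-> ->] : x1 = 0 /\ x2 = 0.
    by move/eqP: M0; rewrite eq_le ge_max => /andP[/andP[? ?] _]; split; lra.
  by rewrite gH0.
set M := Num.max x1 x2 in M_neq0.
have M_gt0 : 0 < M by rewrite lt_def M_neq0 le_max x10.
have xE x : x = M * (x / M) by rewrite mulrC divfK.
rewrite [x1 in gH _ x1](xE x1) [x2 in gH _ _ x2](xE x2).
have M0 := ltW M_gt0.
apply: le_trans (gH_rescale_le M0 _ _ _ y10 y20) _; rewrite ?divr_ge0 //.
  by rewrite -maxr_pMl ?invr_ge0 // divff.
by rewrite !(mulrAC _ M^-1) u10 u20 !mul0r gH_at_y0.
Qed.

Lemma gH_diag_continuous y1 y2 : continuous (fun x => gH e x x y1 y2).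
Proof.
pose P := \sum_(S | indepHstar e S)
  (y1 `^ aS e R S * y2 `^ bS e R S) *: 'X^(vplus e S + vminus e S + vpm e S).
have -> : (fun x => gH e x x y1 y2) = horner P.
  apply: funext => x; rewrite horner_sum; apply: eq_bigr => S _.
  by rewrite hornerZ hornerXn /gH_term minxx !exprD; ring.
exact: continuous_horner.
Qed.

Lemma gH_diag_reduction x1 x2 y1 y2 d : 1 < d ->
  0 <= x1 -> 0 <= x2 -> 0 <= y1 <= 1 -> 0 <= y2 <= 1 -> gH e x1 x2 y1 y2 = d ->
  exists x z1 z2, [/\ 0 <= x, 0 <= z1 <= 1, 0 <= z2 <= 1, Num.max z1 z2 = 1
    & gH e x x z1 z2 = d] /\ x * (z1 + z2) <= x1 * y1 + x2 * y2.
Proof.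
move=> d_gt1 x10 x20 /andP[y10 y11] /andP[y20 y21] gHd.
set u1 := x1 * y1; set u2 := x2 * y2; set X := Num.max u1 u2.
have u10 : 0 <= u1 by rewrite mulr_ge0.
have u20 : 0 <= u2 by rewrite mulr_ge0.
have [X_le0|X_gt0] := leP X 0.
  have [u1E u2E] : u1 = 0 /\ u2 = 0.
    by move: X_le0; rewrite ge_max => /andP[? ?]; split; lra.
  by have := gH_le1_degenerate x10 x20 y10 y20 u1E u2E; lra.
pose z1 := u1 / X; pose z2 := u2 / X.
have z_01 u : 0 <= u -> u <= X -> 0 <= u / X <= 1.
  by move=> u0 uX; rewrite divr_ge0 ?(ltW X_gt0) //= ler_pdivrMr // mul1r.
have max_z : Num.max z1 z2 = 1.
  by rewrite /z1 /z2 -maxr_pMl ?invr_ge0 ?(ltW X_gt0) // divff ?gt_eqF.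
have d_le : d <= gH e X X z1 z2.
  have xE x : x = X * (x / X) by rewrite mulrC divfK ?gt_eqF.
  rewrite -gHd {1}(xE x1) {1}(xE x2) /z1 /z2 /u1 /u2 !(mulrAC _ _ X^-1).
  apply: gH_rescale_le; rewrite ?divr_ge0 ?(ltW X_gt0) //.
  rewrite -maxr_pMl ?invr_ge0 ?(ltW X_gt0) // ler_pdivlMr // mul1r.
  by rewrite ge_max !le_max ler_piMr // ler_piMr // orbT.
have [x] : exists2 x, x \in `[0, X] & gH e x x z1 z2 = d.
  apply: IVT (ltW X_gt0) _ _; first exact/continuous_subspaceT/gH_diag_continuous.
  have one_le : 1 <= gH e X X z1 z2 by lra.
  by rewrite gH0 min_l // max_r // d_le (ltW d_gt1).
rewrite in_itv /= => /andP[x0 xX] gHx.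
exists x, z1, z2; split; first by split; rewrite ?z_01 ?le_max ?lexx ?orbT.
apply: le_trans (ler_wpM2r _ xX) _; first by rewrite addr_ge0 ?divr_ge0 ?(ltW X_gt0).
by rewrite mulrDr ![X * _]mulrC !divfK ?gt_eqF.
Qed.

End GeneratingFunction.

Unset Implicit Arguments.
Local Open Scope classical_set_scope.

Theorem proposition5p5 (R : realType) (V : finType) (e : rel V)
  (e_irr : irreflexive e) (e_nonempty : exists u v, e u v)
  (delta : R) (delta_gt0 : 0 < delta) :
  GH e delta =
    ereal_inf [set z : \bar R | exists x1 y1 y2 : R,
      0 <= x1 /\ 0 <= y1 <= 1 /\ 0 <= y2 <= 1 /\
      gH e x1 x1 y1 y2 = 1 + delta /\ z = (x1 * y1 + x1 * y2)%:E]
  /\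
  GH e delta =
    ereal_inf [set z : \bar R | exists x y1 y2 : R,
      0 <= x /\ 0 <= y1 <= 1 /\ 0 <= y2 <= 1 /\ Num.max y1 y2 = 1 /\
      gH e x x y1 y2 = 1 + delta /\ z = (x * (y1 + y2))%:E].
Proof.
have maxdeg_pos := maxdeg_gt0 e_nonempty.
have d_gt1 : 1 < 1 + delta by rewrite ltrDl.
rewrite /GH; set A := ereal_inf _; set B1 := ereal_inf _; set B2 := ereal_inf _.
have A_le_B1 : (A <= B1)%E.
  apply: ereal_inf_le_dominated => _ [x [y1 [y2 [x0 [y1_01 [y2_01 [gHd ->]]]]]]].
  by exists (x * y1 + x * y2)%:E => //; exists x, x, y1, y2.
have B1_le_B2 : (B1 <= B2)%E.
  apply: ereal_inf_le_dominated => _ [x [y1 [y2 [x0 [y1_01 [y2_01 [_ [gHd ->]]]]]]]].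
  by exists (x * y1 + x * y2)%:E; [exists x, y1, y2 | rewrite mulrDr].
have B2_le_A : (B2 <= A)%E.
  apply: ereal_inf_le_dominated => _ [x1 [x2 [y1 [y2 [x10 [x20 [y1_01 [y2_01 [gHd ->]]]]]]]]].
  have [x [z1 [z2 [[x0 z1_01 z2_01 max_z gHx] obj_le]]]] :=
    gH_diag_reduction maxdeg_pos d_gt1 x10 x20 y1_01 y2_01 gHd.
  by exists (x * (z1 + z2))%:E; [exists x, z1, z2 | rewrite lee_fin].
split; apply: le_anti.
  by rewrite A_le_B1 (le_trans B1_le_B2 B2_le_A).
by rewrite (le_trans A_le_B1 B1_le_B2) B2_le_A.
Qed.
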